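(* Let $\mathcal{L}$ be a homogeneous, translation-invariant linear equation $c_1x_1+\cdots+c_\ell x_\ell=0$, and let $S$ be a finite $\mathcal{L}$-free set of integers. Then for all but finitely many positive integers $\alpha$, the set $S+\alpha=\{s+\alpha:s\in S\}$ is $\mathcal{L}$-sub-equation-free.
   Context: $\mathcal{L}$ is translation-invariant if $\sum_i c_i=0$. A solution of an equation $d_1x_1+\dots+d_m x_m=0$ in $A$ is a tuple in $A^m$ satisfying it; it is trivial if there is a partition $P_1,\dots,P_k$ of $\{1,\dots,m\}$ with $x_i=x_j$ whenever $i,j$ are in the same class and $\sum_{i\in P_r}d_i=0$ for every $r$. $A$ is $\mathcal{L}$-free if it contains no non-trivial solution to $\mathcal{L}$. A proper sub-equation of $\mathcal{L}$ is obtained by deleting a non-empty set of terms (leaving at least one). A set is $\mathcal{L}$-sub-equation-free if it is $\mathcal{L}$-free and contains no non-trivial solution to any proper sub-equation of $\mathcal{L}$. *)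

From mathcomp Require Import all_boot all_order all_algebra.
Set Implicit Arguments. Unset Strict Implicit. Unset Printing Implicit Defensive.
Import Order.TTheory GRing.Theory Num.Theory.
Local Open Scope ring_scope.

(* A linear equation d_1 x_1 + ... + d_m x_m = 0 is represented by its
   coefficient sequence d : seq int. *)

Definition translation_invariant (d : seq int) : Prop := \sum_(a <- d) a = 0.

Definition is_solution (d : seq int) (A : pred int) (x : seq int) : Prop :=
  size x = size d /\ all A x /\ \sum_(i < size d) d`_i * x`_i = 0.

(* trivial solution: there is a partition of the index set (given by class
   labels p) such that x is constant on classes and the coefficients in every
   class sum to 0. *)
Definition trivial_solution (d : seq int) (x : seq int) : Prop :=
  exists p : 'I_(size d) -> 'I_(size d),
    (forall i j, p i = p j -> x`_i = x`_j) /\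
    (forall r, \sum_(i | p i == r) d`_i = 0).

Definition L_free (d : seq int) (A : pred int) : Prop :=
  forall x, is_solution d A x -> trivial_solution d x.

(* proper sub-equation: delete a non-empty set of terms, keeping at least one *)
Definition proper_subeq (d e : seq int) : Prop :=
  exists b : bitseq, [/\ size b = size d, true \in b, false \in b & e = mask b d].

Definition L_subeq_free (d : seq int) (A : pred int) : Prop :=
  L_free d A /\ forall e, proper_subeq d e -> L_free e A.

Definition shift (S : seq int) (alpha : int) : pred int :=
  fun y => (y - alpha) \in S.

From mathcomp Require Import all_boot all_order all_algebra.
Set Implicit Arguments. Unset Strict Implicit. Unset Printing Implicit Defensive.
Import Order.TTheory GRing.Theory Num.Theory.
Local Open Scope ring_scope.

(* Since the coefficients of L sum to zero, translating a set does not change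
   which equations of the form L it solves, so S + alpha is L-free. A proper
   sub-equation whose coefficients also sum to zero inherits freeness from L:
   a solution of it in a set A becomes a solution of L in A after filling the
   deleted positions with one fixed element of the solution. For a
   sub-equation e with coefficient sum sigma <> 0, a solution x in S + alpha
   gives sum_i e_i (x_i - alpha) = - alpha * sigma, where the left-hand side
   is bounded by (sum_{s in S} |s|) * (sum_i |e_i|) independently of alpha;
   so for large alpha there are no solutions at all. *)

Lemma big_zip_nth (d x : seq int) (P : pred (int * int)) (F : int * int -> int) :
  size x = size d ->
  \sum_(pr <- zip d x | P pr) F pr =
  \sum_(i < size d | P (d`_i, x`_i)) F (d`_i, x`_i).
Proof.
move=> Hs; rewrite (big_nth (0, 0)) size_zip Hs minnn big_mkord.
by apply: eq_big => [i|i _]; rewrite nth_zip.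
Qed.

Lemma trivial_solution_ord (d x : seq int) :
  trivial_solution d x <->
  forall v, \sum_(i < size d | x`_i == v) d`_i = 0.
Proof.
split=> [[p [p_const p_sum]] v | sum_v0].
  rewrite (partition_big p xpredT) //=; apply: big1 => r _.
  case: (pickP (fun i => (p i == r) && (x`_i == v))) => [i0|no_i]; last first.
    by apply: big_pred0 => i; rewrite andbC no_i.
  case/andP=> /eqP pi0 /eqP xi0; rewrite -[RHS](p_sum r); apply: eq_bigl => i.
  case pir: (p i == r); rewrite ?andbF ?andbT //.
  by rewrite (p_const i i0) ?xi0 ?eqxx // pi0 (eqP pir).
(* Label each index by a chosen index carrying the same value. *)
pose p (i : 'I_(size d)) := odflt i [pick j : 'I_(size d) | x`_j == x`_i].
have x_p i : x`_(p i) = x`_i by rewrite /p; case: pickP => [j /eqP|].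
have p_eq (i k : 'I_(size d)) : x`_i = x`_k -> p i = p k.
  by move=> xik; rewrite /p xik; case: pickP => // /(_ k); rewrite eqxx.
exists p; split=> [i j pij | r]; first by rewrite -(x_p i) -(x_p j) pij.
case: (pickP (fun i => p i == r)) => [i0 /eqP pi0|no_i]; last exact: big_pred0.
have pr : p r = r by rewrite -pi0; apply: p_eq; rewrite x_p.
rewrite -[RHS](sum_v0 x`_r); apply: eq_bigl => i.
by apply/eqP/eqP => [<-|/p_eq ->]; rewrite ?x_p.
Qed.

Lemma trivial_solutionP (d x : seq int) : size x = size d ->
  trivial_solution d x <->
  forall v, \sum_(pr <- zip d x | pr.2 == v) pr.1 = 0.
Proof.
move=> Hs; apply: iff_trans (trivial_solution_ord d x) _.
by split=> H v; move: (H v); rewrite (big_zip_nth (fun pr => pr.2 == v)).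
Qed.

Lemma solution_sum_zip (d x : seq int) : size x = size d ->
  \sum_(i < size d) d`_i * x`_i = \sum_(pr <- zip d x) pr.1 * pr.2.
Proof. by move=> Hs; rewrite (big_zip_nth predT (fun pr => pr.1 * pr.2)). Qed.

Lemma L_free_shift (d : seq int) (A : pred int) (a : int) :
  translation_invariant d -> L_free d A -> L_free d (fun y => A (y - a)).
Proof.
move=> d_inv A_free x [Hs [xA x_sol]].
have [|p [p_const p_sum]] := A_free [seq y - a | y <- x].
  split; first by rewrite size_map.
  split; first by rewrite all_map.
  transitivity (\sum_(i < size d) (d`_i * x`_i - d`_i * a)).
    by apply: eq_bigr => i _; rewrite (nth_map 0) ?Hs // mulrBr.
  have d_inv_ord : \sum_(i < size d) d`_i = 0.
    by move: d_inv; rewrite /translation_invariant (big_nth 0) big_mkord.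
  by rewrite sumrB x_sol -mulr_suml d_inv_ord mul0r subrr.
exists p; split => // i j /p_const; rewrite !(nth_map 0) ?Hs //; apply: addIr.
Qed.

Section Unmask.

Variable T : Type.

(* [unmask z b y] is the sequence of length [size b] that lists [y] at the
   positions where [b] is true and [z] elsewhere, so that [mask b] recovers [y]. *)
Fixpoint unmask (z : T) (b : bitseq) (y : seq T) : seq T :=
  match b with
  | [::] => [::]
  | true :: b' => head z y :: unmask z b' (behead y)
  | false :: b' => z :: unmask z b' y
  end.

Lemma size_unmask z b y : size (unmask z b y) = size b.
Proof. by elim: b y => [|[] b IH] y //=; rewrite IH. Qed.

Lemma all_unmask (P : pred T) z b y : P z -> all P y -> all P (unmask z b y).
Proof.
move=> Pz; elim: b y => [|[] b IH] y //= Py.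
  by case: y Py => [|t y] /= => [_ | /andP[-> /IH //]]; rewrite Pz IH.
by rewrite Pz IH.
Qed.

Variables (U : Type) (R : nmodType).

Lemma big_mask_negb (b : bitseq) (s : seq U) (F : U -> R) :
  size b = size s ->
  \sum_(u <- s) F u =
  \sum_(u <- mask b s) F u + \sum_(u <- mask (map negb b) s) F u.
Proof.
elim: s b => [|u s IH] [|[] b] //=; first by rewrite !big_nil addr0.
  by move=> [/IH sum_s]; rewrite !big_cons sum_s addrA.
by move=> [/IH sum_s]; rewrite !big_cons sum_s addrCA.
Qed.

Lemma big_zip_unmask z b (c : seq U) (y : seq T) (F : U * T -> R) :
  size b = size c -> size y = count id b ->
  \sum_(pr <- zip c (unmask z b y)) F pr =
  \sum_(pr <- zip (mask b c) y) F pr + \sum_(u <- mask (map negb b) c) F (u, z).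
Proof.
elim: b c y => [|[] b IH] [|u c] y //=.
- by move=> _ /size0nil ->; rewrite !big_nil addr0.
- by case: y => [|t y] //= [Hs] [Hy]; rewrite !big_cons IH // addrA.
- by move=> [Hs] Hy; rewrite !big_cons IH // addrCA.
Qed.

End Unmask.

Lemma L_free_mask (c : seq int) (b : bitseq) (A : pred int) :
  size b = size c -> translation_invariant c ->
  translation_invariant (mask b c) ->
  L_free c A -> L_free (mask b c) A.
Proof.
move=> Hb c_inv cb_inv c_free [|z y] [Hs [yA y_sol]].
  by apply/(trivial_solutionP Hs) => v; case: (mask b c) => [|? ?]; rewrite big_nil.
have Hy : size (z :: y) = count id b by rewrite Hs size_mask.
have rest_inv : \sum_(u <- mask (map negb b) c) u = 0.
  by move: c_inv; rewrite /translation_invariant (big_mask_negb id Hb) cb_inv add0r.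
set x := unmask z b (z :: y).
have Hx : size x = size c by rewrite size_unmask.
have x_sol : is_solution c A x.
  split=> //; split; first by apply: all_unmask => //; case/andP: yA.
  rewrite solution_sum_zip // big_zip_unmask // -solution_sum_zip // y_sol.
  by rewrite -mulr_suml rest_inv mul0r addr0.
apply/(trivial_solutionP Hs) => v.
have := (trivial_solutionP Hx).1 (c_free x x_sol) v.
rewrite big_mkcond big_zip_unmask // -big_mkcond [X in _ + X](_ : _ = 0) ?addr0 //=.
by case: (z == v); rewrite ?rest_inv ?big1.
Qed.

Lemma norm_le_sum_norm (S : seq int) t : t \in S -> `|t| <= \sum_(u <- S) `|u|.
Proof. by move=> tS; rewrite (big_rem t) //= lerDl sumr_ge0. Qed.

Lemma no_solution_shift_large (e S : seq int) (a : int) (x : seq int) :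
  \sum_(u <- e) u != 0 ->
  (\sum_(t <- S) `|t|) * (\sum_(u <- e) `|u|) < a ->
  ~ is_solution e (shift S a) x.
Proof.
move=> e_sum_neq0 a_large [Hs [xS x_sol]].
set M := \sum_(t <- S) `|t| in a_large.
have a_ge0 : 0 <= a by apply/ltW/(le_lt_trans _ a_large); rewrite mulr_ge0 ?sumr_ge0.
have xa_le (i : 'I_(size e)) : `|x`_i - a| <= M.
  by apply/norm_le_sum_norm/(allP xS)/mem_nth; rewrite Hs.
have shifted_sum : \sum_(i < size e) e`_i * (x`_i - a) = - (a * \sum_(u <- e) u).
  apply/eqP; rewrite -addr_eq0; apply/eqP.
  rewrite -[RHS]x_sol [\sum_(u <- e) u](big_nth 0) big_mkord mulr_sumr -big_split.
  by apply: eq_bigr => i _; rewrite /= mulrBr [a * _]mulrC subrK.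
have : a * `|\sum_(u <- e) u| <= M * \sum_(u <- e) `|u|.
  rewrite -(ger0_norm a_ge0) -normrM -normrN -shifted_sum.
  apply: (le_trans (ler_norm_sum _ _ _)).
  rewrite (big_nth 0) big_mkord mulr_sumr; apply: ler_sum => i _.
  by rewrite normrM mulrC ler_wpM2r.
have e_sum_ge1 : 1 <= `|\sum_(u <- e) u| by rewrite -gtz0_ge1 normr_gt0.
move/(le_trans (ler_peMr a_ge0 e_sum_ge1)).
by rewrite leNgt a_large.
Qed.

Theorem mainTheorem11 (c : seq int) (S : seq int) :
  all (fun a => a != 0) c ->
  translation_invariant c ->
  L_free c (fun y => y \in S) ->
  exists N : nat, forall alpha : nat, (N < alpha)%N ->
    L_subeq_free c (shift S alpha%:Z).
Proof.
move=> _ c_inv S_free.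
set M := \sum_(t <- S) `|t|; set K := \sum_(u <- c) `|u|.
have MK_ge0 : 0 <= M * K by rewrite mulr_ge0 ?sumr_ge0.
exists (absz (M * K)) => alpha alpha_large.
have MK_lt : M * K < alpha%:Z by rewrite -[M * K]gez0_abs // ltz_nat.
split; first exact: L_free_shift.
move=> e [b [Hb _ _ ->]].
have [cb_inv|cb_not_inv] := eqVneq (\sum_(u <- mask b c) u) 0.
  exact/L_free_shift/L_free_mask.
move=> x /no_solution_shift_large [] //; apply: le_lt_trans MK_lt.
rewrite ler_wpM2l ?sumr_ge0 // /K (big_mask_negb _ Hb) lerDl.
exact: sumr_ge0.
Qed.
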